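(* Let $n$ be a positive integer. The lattice $\widetilde\Pi(D_n)$ is modular if and only if $n$ is of one of the following forms: (1) $n=2^\alpha$ for some integer $\alpha\ge 0$; (2) $n=\prod_{i=1}^{k}p_i^{t_i}$ where $p_1,\dots,p_k$ are distinct odd primes and $t_1,\dots,t_k\ge 0$ are integers (i.e., $n$ is odd); (3) $n=2p^{\alpha}$ where $p$ is an odd prime and $\alpha\ge 1$.
   Context: For a positive integer $n$, $D_n=\langle r,s\mid r^n=e,\ s^2=e,\ srs^{-1}=r^{-1}\rangle$ is the dihedral group of order $2n$. For a finite group $G$ and a subgroup $H\le G$, let $\pi_e(H)=\{o(x)\mid x\in H\}$. Let $\mathcal{L}(G)$ be the set of subgroups of $G$; define $H_1\equiv H_2$ iff $\pi_e(H_1)=\pi_e(H_2)$, with class $[H]$. The poset $\widetilde\Pi(G)$ is $\mathcal{L}(G)/\!\equiv$ ordered by $[H_1]\lesssim[H_2]$ iff $\pi_e(H_1)\subseteq\pi_e(H_2)$; for $G=D_n$ it is a lattice. *)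

From mathcomp Require Import all_boot all_fingroup all_solvable.
Set Implicit Arguments. Unset Strict Implicit. Unset Printing Implicit Defensive.
Local Open Scope group_scope.

Section PiE.
Variable gT : finGroupType.

Definition pie (H : {set gT}) : seq nat := [seq #[x] | x in H].

(* [H1] <= [H2] in Pi~(G) iff pi_e(H1) is contained in pi_e(H2) *)
Definition pie_le (H K : {set gT}) : Prop := {subset pie H <= pie K}.
Definition pie_eq (H K : {set gT}) : Prop := pie_le H K /\ pie_le K H.

Definition pie_is_join (G A B J : {group gT}) : Prop :=
  [/\ J \subset G, pie_le A J, pie_le B J &
      forall W : {group gT}, W \subset G -> pie_le A W -> pie_le B W -> pie_le J W].

Definition pie_is_meet (G A B M : {group gT}) : Prop :=
  [/\ M \subset G, pie_le M A, pie_le M B &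
      forall W : {group gT}, W \subset G -> pie_le W A -> pie_le W B -> pie_le W M].

Definition pie_lattice (G : {group gT}) : Prop :=
  forall A B : {group gT}, A \subset G -> B \subset G ->
    (exists J : {group gT}, pie_is_join G A B J) /\
    (exists M : {group gT}, pie_is_meet G A B M).

(* Pi~(G) is a modular lattice:
   [A] <= [C] -> [A] \/ ([B] /\ [C]) = ([A] \/ [B]) /\ [C] *)
Definition pie_modular (G : {group gT}) : Prop :=
  pie_lattice G /\
  forall A B C : {group gT}, A \subset G -> B \subset G -> C \subset G ->
    pie_le A C ->
    forall M J1 J2 M2 : {group gT},
      pie_is_meet G B C M -> pie_is_join G A M J1 ->
      pie_is_join G A B J2 -> pie_is_meet G J2 C M2 ->
      pie_eq J1 M2.
End PiE.

From mathcomp Require Import all_boot all_fingroup all_solvable.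
From mathcomp Require Import order zmodp zify.
Set Implicit Arguments. Unset Strict Implicit. Unset Printing Implicit Defensive.

(* The class of a subgroup W of D_n = <r> x| <s> in the poset is determined by
   k = |W :&: <r>| and by whether W contains a reflection: pi_e(W) consists of
   the divisors of k, together with 2 if W is not contained in <r>. After
   normalisation the classes are the pairs (m, c) with m | n, m <> 2 and c
   forced when m is even, ordered by divisibility and implication; joins are
   computed by (lcm, ||) and meets by (gcd, &&), except that a gcd equal to 2
   must be replaced by 1. Hence the lattice is modular exactly when no two
   divisors of n different from 2 have gcd 2, an arithmetic condition that
   singles out the three listed forms of n. *)

Lemma dvdn2E d : (d %| 2) = (d == 1) || (d == 2).
Proof. by case: d => [|[|[|d]]]. Qed.

Definition modular_dihedral_order n : Prop :=
  [\/ exists a : nat, n = (2 ^ a)%N,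
      odd n
    | exists p a : nat, [/\ prime p, odd p, 0 < a & n = (2 * p ^ a)%N]].

Definition gcd2_free n :=
  forall a b, a %| n -> b %| n -> a != 2 -> b != 2 -> gcdn a b != 2.

Lemma odd_prime_gcd2_free p a : prime p -> odd p -> gcd2_free (2 * p ^ a).
Proof.
move=> p_pr p_odd x y xn yn x2 y2; apply/eqP => gxy2.
have dvdp_even z : z %| 2 * p ^ a -> z != 2 -> 2 %| z -> p %| z.
  move=> + z2 /dvdnP[k def_z]; rewrite def_z mulnC dvdn_pmul2l //.
  case/(dvdn_pfactor _ _ p_pr) => -[|i] _ def_k; first by rewrite def_z def_k in z2.
  by rewrite def_k dvdn_mull // dvdn_exp.
have [x_even y_even] : 2 %| x /\ 2 %| y by split; rewrite -gxy2 ?dvdn_gcdl ?dvdn_gcdr.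
have : p %| gcdn x y by rewrite dvdn_gcd !dvdp_even.
rewrite gxy2 dvdn2E => /pred2P[p1|p2]; first by rewrite p1 in p_pr.
by move: p_odd; rewrite p2.
Qed.

Lemma expn2_gcd2_free a : gcd2_free (2 ^ a).
Proof.
move=> x y xn yn x2 y2; apply/eqP => gxy2.
have dvd4 z : z %| 2 ^ a -> z != 2 -> 2 %| z -> 4 %| z.
  case/(dvdn_pfactor _ _ (isT : prime 2)) => -[|[|i]] _ -> //= _ _.
  by rewrite !expnS mulnA dvdn_mulr.
have [x_even y_even] : 2 %| x /\ 2 %| y by split; rewrite -gxy2 ?dvdn_gcdl ?dvdn_gcdr.
by have := dvdn_gcd 4 x y; rewrite gxy2 (dvd4 x) ?(dvd4 y).
Qed.

Lemma odd_gcd2_free n : odd n -> gcd2_free n.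
Proof.
move=> n_odd x y xn _ _ _; apply: contraTneq n_odd => gxy2.
by rewrite -dvdn2 (dvdn_trans _ xn) // -[2]gxy2 dvdn_gcdl.
Qed.

Lemma modular_dihedral_order_gcd2_free n : modular_dihedral_order n -> gcd2_free n.
Proof.
case=> [[a ->]|/odd_gcd2_free//|[p [a [p_pr p_odd _ ->]]]].
  exact: expn2_gcd2_free.
exact: odd_prime_gcd2_free.
Qed.

Lemma modular_dihedral_orderVgcd2_pair n : 0 < n ->
  modular_dihedral_order n \/
  exists b c, [/\ b %| n, 2 * c %| n, b != 2, odd c && (1 < c) & gcdn b (2 * c) = 2].
Proof.
move=> n_gt0; have [n_odd|n_even] := boolP (odd n); first by left; apply: Or32.
have [n_2nat|] := boolP (2.-nat n).
  by left; apply: Or31; exists (logn 2 n); rewrite -p_part part_pnat_id.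
rewrite /pnat n_gt0 => /allPn[p]; rewrite mem_primes n_gt0 /= => /andP[p_pr pn] p_neq2.
have p_odd : odd p by case/even_prime: p_pr p_neq2 => [->|].
have p_gt1 := prime_gt1 p_pr.
have [o def_n] : exists o, n = 2 * o.
  by move: n_even; rewrite -dvdn2 => /dvdnP[o ->]; exists o; rewrite mulnC.
have o_gt0 : 0 < o by rewrite def_n muln_gt0 in n_gt0.
have po : p %| o by rewrite -(Gauss_dvdr _ (_ : coprime p 2)) -?def_n // coprime_sym coprime2n.
have [o_pnat|] := boolP (p.-nat o).
  left; apply: Or33; exists p, (logn p o); split=> //.
    by rewrite logn_gt0 mem_primes p_pr o_gt0.
  by rewrite -p_part part_pnat_id.
rewrite /pnat o_gt0 => /allPn[q]; rewrite mem_primes o_gt0 /= => /andP[q_pr qo] q_neq_p.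
right; exists (2 * q), p; split; rewrite ?p_odd // ?def_n ?dvdn_pmul2l //.
- by have := prime_gt1 q_pr; lia.
- by rewrite -muln_gcdr (eqP (_ : coprime q p)) // prime_coprime // dvdn_prime2.
Qed.

Section PieOrder.
Variables (gT : finGroupType) (G : {group gT}).

Lemma pie_eq_meet (B C M M' : {group gT}) :
  pie_is_meet G B C M -> pie_is_meet G B C M' -> pie_eq M M'.
Proof. by case=> sMG MB MC maxM [sM'G M'B M'C maxM']; split; [apply: maxM' | apply: maxM]. Qed.

Lemma pie_eq_join (A B J J' : {group gT}) :
  pie_is_join G A B J -> pie_is_join G A B J' -> pie_eq J J'.
Proof. by case=> sJG AJ BJ minJ [sJ'G AJ' BJ' minJ']; split; [apply: minJ | apply: minJ']. Qed.

End PieOrder.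

(* A gcd equal to 2 only arises from two even codes, whose meet {1, 2} is coded
   (1, true). *)
Definition trim2 m := if m == 2 then 1 else m.

Lemma trim2_dvd m : trim2 m %| m.
Proof. by rewrite /trim2; case: eqP. Qed.

(* (m, c) codes the divisors of m, together with 2 when c holds; validity makes
   the code of a set unique. *)
Definition valid_code n m (c : bool) := [&& m %| n, m != 2 & (2 %| m) ==> c].

Definition pie_code (gT : finGroupType) n (W : {set gT}) m c :=
  (forall d, (d \in pie W) = (d %| m) || (d == 2) && c) /\ valid_code n m c.

Section PieCode.
Variables (gT : finGroupType) (n : nat).
Implicit Types (A B : {set gT}) (a b m : nat) (ca cb c : bool).

Lemma valid_code_meet a ca b cb : valid_code n a ca -> valid_code n b cb ->
  valid_code n (trim2 (gcdn a b)) (ca && cb).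
Proof.
case/and3P=> an _ a_even /and3P[_ _ b_even]; apply/and3P; split.
- exact: dvdn_trans (trim2_dvd _) (dvdn_trans (dvdn_gcdl _ _) an).
- by rewrite /trim2; case: ifP => // /negbT.
rewrite /trim2; case: eqP => // _; apply/implyP => g_even.
by rewrite (implyP a_even) ?(implyP b_even) // (dvdn_trans g_even) ?dvdn_gcdl ?dvdn_gcdr.
Qed.

Lemma valid_code_join a ca b cb : valid_code n a ca -> valid_code n b cb ->
  valid_code n (lcmn a b) (ca || cb).
Proof.
case/and3P=> an a2 a_even /and3P[bn b2 b_even]; apply/and3P; split.
- by rewrite dvdn_lcm an bn.
- apply: contra_neq a2 => l2.
  have : b %| 2 by rewrite -l2 dvdn_lcmr.
  have : a %| 2 by rewrite -l2 dvdn_lcml.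
  rewrite !dvdn2E (negbTE b2) orbF => /orP[/eqP a1|/eqP //] /eqP b1.
  by rewrite -l2 a1 b1.
apply/implyP => l_even.
have : 2 %| a * b by rewrite (dvdn_trans l_even) // dvdn_lcm dvdn_mulr ?dvdn_mull.
by rewrite Euclid_dvdM // => /orP[/(implyP a_even) -> | /(implyP b_even) ->]; rewrite ?orbT.
Qed.

Lemma pie_code_le A a ca B b cb : pie_code n A a ca -> pie_code n B b cb ->
  pie_le A B <-> (a %| b) && (ca ==> cb).
Proof.
move=> [memA /and3P[_ a2 _]] [memB /and3P[_ _ b_even]]; split=> [leAB|].
  have : a \in pie B by apply: leAB; rewrite memA dvdnn.
  rewrite memB => /orP[-> /=|/andP[/eqP a2' _]]; last by rewrite a2' in a2.
  apply/implyP => ca_true; have : 2 \in pie B by apply: leAB; rewrite memA ca_true orbT.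
  by rewrite memB => /orP[/(implyP b_even)|/andP[_ ->]].
case/andP=> ab ca_cb d; rewrite memA memB => /orP[da|/andP[-> /(implyP ca_cb) ->]].
  by rewrite (dvdn_trans da ab).
by rewrite orbT.
Qed.

Lemma pie_eq_code A B m c : pie_code n A m c -> pie_code n B m c -> pie_eq A B.
Proof.
move=> codeA codeB; split.
  by apply/(pie_code_le codeA codeB); rewrite dvdnn implybb.
by apply/(pie_code_le codeB codeA); rewrite dvdnn implybb.
Qed.

Lemma eq_pie_code A B m c : pie_eq A B -> pie_code n A m c -> pie_code n B m c.
Proof.
move=> [leAB leBA] [memA validA]; split=> // d; rewrite -memA.
by apply/idP/idP; [apply: leBA | apply: leAB].
Qed.

End PieCode.

Section PieCodeLattice.
Variables (gT : finGroupType) (G : {group gT}) (n : nat).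
Hypothesis pie_code_subgroup :
  forall W : {group gT}, W \subset G -> exists m c, pie_code n W m c.
Hypothesis pie_code_realized :
  forall m c, valid_code n m c -> exists2 W : {group gT}, W \subset G & pie_code n W m c.

Local Notation code := (pie_code n).

Lemma pie_is_meet_code (B C M : {group gT}) b cb c cc :
  code B b cb -> code C c cc -> code M (trim2 (gcdn b c)) (cb && cc) ->
  M \subset G -> pie_is_meet G B C M.
Proof.
move=> codeB codeC codeM sMG; split=> //.
- rewrite (pie_code_le codeM codeB) (dvdn_trans (trim2_dvd _) (dvdn_gcdl _ _)).
  by case: (cb); case: (cc).
- rewrite (pie_code_le codeM codeC) (dvdn_trans (trim2_dvd _) (dvdn_gcdr _ _)).
  by case: (cb); case: (cc).
move=> W sWG; have [w [cw codeW]] := pie_code_subgroup sWG.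
rewrite (pie_code_le codeW codeB) (pie_code_le codeW codeC) (pie_code_le codeW codeM).
case/andP=> wb cw_cb /andP[wc cw_cc]; apply/andP; split; last first.
  by move: cw_cb cw_cc; case: (cw); case: (cb); case: (cc).
have w_gcd : w %| gcdn b c by rewrite dvdn_gcd wb wc.
rewrite /trim2; case: eqP w_gcd => // -> /[!dvdn2E] /orP[/eqP-> // | w2].
by case: codeW => _ /and3P[_ /negP/(_ w2)].
Qed.

Lemma pie_is_join_code (A B J : {group gT}) a ca b cb :
  code A a ca -> code B b cb -> code J (lcmn a b) (ca || cb) ->
  J \subset G -> pie_is_join G A B J.
Proof.
move=> codeA codeB codeJ sJG; split=> //.
- by rewrite (pie_code_le codeA codeJ) dvdn_lcml; case: (ca).
- by rewrite (pie_code_le codeB codeJ) dvdn_lcmr; case: (ca); case: (cb).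
move=> W sWG; have [w [cw codeW]] := pie_code_subgroup sWG.
rewrite (pie_code_le codeA codeW) (pie_code_le codeB codeW) (pie_code_le codeJ codeW).
case/andP=> aw ca_cw /andP[bw cb_cw]; rewrite dvdn_lcm aw bw /=.
by move: ca_cw cb_cw; case: (cw); case: (ca); case: (cb).
Qed.

Lemma pie_meet_exists (B C : {group gT}) b cb c cc :
  code B b cb -> code C c cc -> exists M : {group gT}, pie_is_meet G B C M.
Proof.
move=> codeB codeC; have [M sMG codeM] := pie_code_realized (valid_code_meet codeB.2 codeC.2).
by exists M; apply: pie_is_meet_code codeM sMG.
Qed.

Lemma pie_join_exists (A B : {group gT}) a ca b cb :
  code A a ca -> code B b cb -> exists J : {group gT}, pie_is_join G A B J.
Proof.
move=> codeA codeB; have [J sJG codeJ] := pie_code_realized (valid_code_join codeA.2 codeB.2).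
by exists J; apply: pie_is_join_code codeJ sJG.
Qed.

Lemma pie_meet_code (B C M : {group gT}) b cb c cc :
  code B b cb -> code C c cc -> pie_is_meet G B C M ->
  code M (trim2 (gcdn b c)) (cb && cc).
Proof.
move=> codeB codeC meetM.
have [M' sM'G codeM'] := pie_code_realized (valid_code_meet codeB.2 codeC.2).
exact: eq_pie_code (pie_eq_meet (pie_is_meet_code codeB codeC codeM' sM'G) meetM) codeM'.
Qed.

Lemma pie_join_code (A B J : {group gT}) a ca b cb :
  code A a ca -> code B b cb -> pie_is_join G A B J -> code J (lcmn a b) (ca || cb).
Proof.
move=> codeA codeB joinJ.
have [J' sJ'G codeJ'] := pie_code_realized (valid_code_join codeA.2 codeB.2).
exact: eq_pie_code (pie_eq_join (pie_is_join_code codeA codeB codeJ' sJ'G) joinJ) codeJ'.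
Qed.

Lemma pie_lattice_code : pie_lattice G.
Proof.
move=> A B sAG sBG; have [a [ca codeA]] := pie_code_subgroup sAG.
have [b [cb codeB]] := pie_code_subgroup sBG.
by split; [apply: pie_join_exists codeA codeB | apply: pie_meet_exists codeA codeB].
Qed.

Lemma trim2_gcd2_free a ca b cb : gcd2_free n ->
  valid_code n a ca -> valid_code n b cb -> trim2 (gcdn a b) = gcdn a b.
Proof.
move=> free /and3P[an a2 _] /and3P[bn b2 _].
by rewrite /trim2 (negbTE (free a b an bn a2 b2)).
Qed.

Lemma pie_modular_gcd2_free : gcd2_free n -> pie_modular G.
Proof.
move=> free; split=> [|A B C sAG sBG sCG leAC M J1 J2 M2 meetM joinJ1 joinJ2 meetM2].
  exact: pie_lattice_code.
have [a [ca codeA]] := pie_code_subgroup sAG.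
have [b [cb codeB]] := pie_code_subgroup sBG.
have [c [cc codeC]] := pie_code_subgroup sCG.
have codeM := pie_meet_code codeB codeC meetM.
have codeJ1 := pie_join_code codeA codeM joinJ1.
have codeJ2 := pie_join_code codeA codeB joinJ2.
have codeM2 := pie_meet_code codeJ2 codeC meetM2.
have /andP[ac ca_cc] := iffLR (pie_code_le codeA codeC) leAC.
have flags : ca || cb && cc = (ca || cb) && cc.
  by move: ca_cc; case: (ca); case: (cb); case: (cc).
rewrite (trim2_gcd2_free free codeB.2 codeC.2) flags in codeJ1.
rewrite (trim2_gcd2_free free codeJ2.2 codeC.2) Order.NatDvd.meetUl (gcdn_idPl ac) in codeM2.
exact: pie_eq_code codeJ1 codeM2.
Qed.

Lemma pie_not_modular_gcd2_pair b c : b %| n -> 2 * c %| n -> b != 2 ->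
  odd c && (1 < c) -> gcdn b (2 * c) = 2 -> ~ pie_modular G.
Proof.
move=> bn cn b2 /andP[c_odd c_gt1] gcd_b2c [_ modularG].
have [A sAG codeA] : exists2 A : {group gT}, A \subset G & code A c true.
  by apply: pie_code_realized; rewrite /valid_code (dvdn_trans _ cn) ?dvdn_mull //; lia.
have [B sBG codeB] : exists2 B : {group gT}, B \subset G & code B b true.
  by apply: pie_code_realized; rewrite /valid_code bn b2 implybT.
have [C sCG codeC] : exists2 C : {group gT}, C \subset G & code C (2 * c) true.
  by apply: pie_code_realized; rewrite /valid_code cn; lia.
have leAC : pie_le A C by rewrite (pie_code_le codeA codeC) dvdn_mull.
have [M meetM] := pie_meet_exists codeB codeC.
have codeM := pie_meet_code codeB codeC meetM.
have [J1 joinJ1] := pie_join_exists codeA codeM.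
have [J2 joinJ2] := pie_join_exists codeA codeB.
have codeJ2 := pie_join_code codeA codeB joinJ2.
have [M2 meetM2] := pie_meet_exists codeJ2 codeC.
(* A \/ (B /\ C) is coded (c, true) but (A \/ B) /\ C is coded (2 * c, true). *)
have [_] := modularG A B C sAG sBG sCG leAC M J1 J2 M2 meetM joinJ1 joinJ2 meetM2.
rewrite (pie_code_le (pie_meet_code codeJ2 codeC meetM2) (pie_join_code codeA codeM joinJ1)).
have lcm_c2 : lcmn c 2 = 2 * c.
  apply/eqP; rewrite eqn_dvd dvdn_lcm dvdn_mull ?dvdn_mulr //=.
  by rewrite Gauss_dvd ?coprime2n // dvdn_lcml dvdn_lcmr.
rewrite Order.NatDvd.meetUl gcdnMl gcd_b2c lcm_c2 /trim2 eqxx lcmn1.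
rewrite ifN; last by lia.
by case/andP=> /dvdn_leq; lia.
Qed.

End PieCodeLattice.

Local Open Scope group_scope.

Section DihedralPie.
Variables (gT : finGroupType) (G : {group gT}) (r s : gT).
Hypotheses (Gr : r \in G) (s_outside_r : s \in G :\: <[r]>).
Hypothesis order_outside_r : {in G :\: <[r]>, forall x, #[x] = 2%N}.
Hypothesis conj_s : {in <[r]>, forall a, a ^ s = a^-1}.

Lemma mem_pie_dihedral (W : {group gT}) d : W \subset G ->
  (d \in pie W) = (d %| #|W :&: <[r]>|)%N || (d == 2%N) && ~~ (W \subset <[r]>).
Proof.
move=> sWG; apply/imageP/idP => [[x Wx ->]|].
  have [xr|xNr] := boolP (x \in <[r]>); first by rewrite order_dvdG // inE Wx xr.
  have -> : ~~ (W \subset <[r]>) by apply/subsetPn; exists x.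
  by rewrite order_outside_r ?inE ?xNr ?(subsetP sWG) // eqxx orbT.
case/orP=> [d_dvd | /andP[/eqP-> /subsetPn[x Wx xNr]]]; last first.
  by exists x; rewrite // order_outside_r // inE xNr (subsetP sWG).
have /cyclicP[y def_y] : cyclic (W :&: <[r]>).
  exact: cyclicS (subsetIr _ _) (cycle_cyclic r).
have /setIP[Wy _] : y \in W :&: <[r]> by rewrite def_y cycle_id.
rewrite def_y -orderE in d_dvd.
exists (y ^+ (#[y] %/ d)); first exact: groupX.
by rewrite orderXdiv ?dvdn_div // divnA // mulKn // (dvdn_gt0 _ d_dvd).
Qed.

Lemma pie_code_dihedral_subgroup (W : {group gT}) : W \subset G ->
  exists m c, pie_code #[r] W m c.
Proof.
move=> sWG; set k := #|W :&: <[r]>|; set c := ~~ (W \subset <[r]>).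
have k_dvd : (k %| #[r])%N by rewrite orderE cardSg // subsetIr.
have [k2|k2] := eqVneq k 2%N.
  exists 1%N, true; split=> [d|]; last by rewrite /valid_code dvd1n.
  rewrite mem_pie_dihedral // -/k k2 dvdn2E dvdn1 andbT.
  by case: (d == 2%N); rewrite ?orbT ?orbF.
exists k, (c || (2 %| k)%N); split=> [d|]; last first.
  by rewrite /valid_code k_dvd k2; apply/implyP => ->; rewrite orbT.
rewrite mem_pie_dihedral // -/k -/c; case d_dvd: (d %| k)%N => //=.
by case: eqP => //= d2; rewrite -d2 d_dvd orbF.
Qed.

Lemma pie_code_dihedral_realized m c : valid_code #[r] m c ->
  exists2 W : {group gT}, W \subset G & pie_code #[r] W m c.
Proof.
move=> valid; have m_dvd : (m %| #[r])%N by case/and3P: valid.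
have m_gt0 : (0 < m)%N := dvdn_gt0 (order_gt0 r) m_dvd.
pose t := r ^+ (#[r] %/ m).
have o_t : #[t] = m by rewrite orderXdiv ?dvdn_div // divnA // mulKn.
have t_r : <[t]> \subset <[r]> by rewrite cycle_subG mem_cycle.
have t_G : <[t]> \subset G by rewrite cycle_subG groupX.
suff [W sWG capW] : exists2 W : {group gT}, W \subset G &
    W :&: <[r]> = <[t]> /\ ~~ (W \subset <[r]>) = c.
  case: capW => capW sub_c; exists W => //; split=> // d.
  by rewrite mem_pie_dihedral // capW -orderE o_t sub_c.
case: c {valid}; last first.
  by exists <[t]>%G; rewrite // (setIidPl t_r) t_r.
have s_norm_t : <[s]> \subset 'N(<[t]>).
  by rewrite norms_cycle conj_s ?groupV ?cycle_id // mem_cycle.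
have /setDP[Gs s_notin_r] := s_outside_r.
have s_G : <[s]> \subset G by rewrite cycle_subG.
have o_s : #|<[s]>| = 2%N by rewrite -orderE order_outside_r.
exists (<[t]> <*> <[s]>)%G; first by rewrite join_subG t_G.
rewrite /= norm_joinEr //; split.
  rewrite -group_modl // prime_TIg ?o_s ?cycle_subG ?mulg1 //.
by apply/subsetPn; exists s; rewrite // -{1}[s]mul1g mem_mulg ?group1 ?cycle_id.
Qed.

End DihedralPie.

Lemma dihedral_presentation_card n (gT : finGroupType) (G : {group gT}) : (0 < n)%N ->
  G \isog Grp (r : s : r ^+ n, s ^+ 2, r ^ s = r^-1) -> (n.*2 <= #|G|)%N.
Proof.
move=> n_gt0 isoG; have [n_gt1|] := ltnP 1 n.
  have : 'D_n.*2 \homg G by rewrite isoG; apply: isoGrp_hom (Grp_dihedral n_gt1).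
  by move/card_homg; rewrite card_dihedral // => /dvdn_leq->.
move=> n_le1; have -> : n = 1%N by lia.
have : [set: 'Z_2] \homg G.
  rewrite isoG; apply/existsP; exists (1, Zp1); rewrite /= !xpair_eqE /=.
  rewrite cycle1 joing1G eqEcard subsetT cardsT card_ord -orderE order_Zp1 /=.
  by rewrite expg1n conj1g invg1 !eqxx.
by move/card_homg; rewrite cardsT card_ord => /dvdn_leq->.
Qed.

Lemma dihedral_presentation_generators n (gT : finGroupType) (G : {group gT}) :
  (0 < n)%N -> G \isog Grp (r : s : r ^+ n, s ^+ 2, r ^ s = r^-1) ->
  exists r s, [/\ r \in G, s \in G :\: <[r]>, #[r] = n,
    {in G :\: <[r]>, forall x, #[x] = 2%N} & {in <[r]>, forall a, a ^ s = a^-1}].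
Proof.
move=> n_gt0 isoG; have card_G := dihedral_presentation_card n_gt0 isoG.
have /existsP[[x y] /= /eqP[defG xn y2 xy]] := isoGrp_hom isoG.
have conj_y : {in <[x]>, forall a, a ^ y = a^-1}.
  by move=> a /cycleP[i ->]; rewrite conjXg xy expVgn.
have y_norm_x : <[y]> \subset 'N(<[x]>) by rewrite norms_cycle xy groupV cycle_id.
have defG' : G :=: <[x]> * <[y]> by rewrite -defG norm_joinEr.
have ox_le : (#[x] <= n)%N by apply: dvdn_leq; rewrite // order_dvdn xn.
have oy_le : (#[y] <= 2)%N by apply: dvdn_leq; rewrite // order_dvdn y2.
have cap_gt0 : (0 < #|<[x]> :&: <[y]>|)%N := cardG_gt0 _.
have := mul_cardG <[x]> <[y]>; rewrite -!orderE -defG' => card_xy.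
have oxy_le : (#[x] * #[y] <= n * 2)%N by apply: leq_mul.
rewrite -mul2n in card_G.
have [ox oy cap1] : [/\ #[x] = n, #[y] = 2%N & #|<[x]> :&: <[y]>| = 1%N].
  move: card_xy oxy_le card_G ox_le oy_le cap_gt0.
  move: #[x] #[y] #|<[x]> :&: <[y]>| #|G| => X Y K g *.
  have K1 : K = 1%N by nia.
  have X_n : X = n by nia.
  by split=> //; nia.
have TI_xy : <[x]> :&: <[y]> = 1.
  by apply: cardMg_TI; rewrite -!orderE -defG' card_xy cap1 muln1.
have Gx : x \in G by rewrite -defG mem_gen // inE cycle_id.
have Gy : y \in G by rewrite -defG mem_gen // inE cycle_id orbT.
have yNx : y \notin <[x]>.
  apply/negP => yx; have : y \in <[x]> :&: <[y]> by rewrite inE yx cycle_id.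
  by rewrite TI_xy => /set1P y1; move: oy; rewrite y1 order1.
exists x, y; split; rewrite ?inE ?yNx // => z /setDP[]; rewrite defG' => /mulsgP[a b ax].
rewrite cycle2g // => /set2P[->|->] -> zNx; first by rewrite mulg1 ax in zNx.
have yV : y^-1 = y by apply/eqP; rewrite eq_invg_mul -[y * y]/(y ^+ 2) y2.
have : (a * y) ^+ 2 = 1.
  by rewrite expgS expg1 -mulgA (mulgA y) -{1}yV -mulgA -/(a ^ y) conj_y // mulgV.
move/eqP; rewrite -order_dvdn dvdn2E => /orP[/eqP/eqP|/eqP //].
by rewrite order_eq1 => /eqP ay1; rewrite ay1 group1 in zNx.
Qed.

Theorem theorem2p10 (n : nat) (gT : finGroupType) (G : {group gT}) :
  0 < n ->
  G \isog Grp (r : s : r ^+ n, s ^+ 2, r ^ s = r^-1) ->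
  pie_modular G <->
  [\/ exists a : nat, n = (2 ^ a)%N,
      odd n
    | exists p a : nat, [/\ prime p, odd p, 0 < a & n = (2 * p ^ a)%N]].
Proof.
move=> n_gt0 isoG.
have [r [s [Gr s_out o_r order_out conj_s]]] := dihedral_presentation_generators n_gt0 isoG.
have coded : forall W : {group gT}, W \subset G -> exists m c, pie_code n W m c.
  by rewrite -o_r; apply: pie_code_dihedral_subgroup order_out.
have realized : forall m c, valid_code n m c ->
    exists2 W : {group gT}, W \subset G & pie_code n W m c.
  by rewrite -o_r; apply: pie_code_dihedral_realized Gr s_out order_out conj_s.
split=> [modularG | /modular_dihedral_order_gcd2_free].
  have [//|[b [c [bn cn b2 c_odd_gt1 gcd_bc]]]] := modular_dihedral_orderVgcd2_pair n_gt0.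
  by case: (pie_not_modular_gcd2_pair coded realized bn cn b2 c_odd_gt1 gcd_bc).
exact: pie_modular_gcd2_free coded realized.
Qed.
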